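(* Let $G$ be a finite abelian group with uniform probability measure $\mu$ and dual group $\hat G$, and let $\mathcal F = \{\mathrm{Re}\,u_\gamma, \mathrm{Im}\,u_\gamma : \gamma\in\hat G\}$. If $R$ is a degree-$d$ Riesz $\mathcal F$-product, then $\mathrm{Spec}_0(R) = \{\gamma\in\hat G : \hat R(\gamma)\neq0\}$ is $d$-covered.
   Context: For $\gamma\in\hat G$, $u_\gamma : G\to\mathbb C$ is the corresponding character (so $u_\gamma u_{\gamma'} = u_{\gamma+\gamma'}$ and $|u_\gamma|\le1$). Every $f:G\to\mathbb C$ is written $f=\sum_{\gamma\in\hat G}\hat f(\gamma)u_\gamma$. A degree-$d$ Riesz $\mathcal F$-product is a function $R(x)=\prod_{i=1}^d(1+\epsilon_i\varphi_i(x))$ with $\varphi_i\in\mathcal F$, $\epsilon_i\in\{-1,0,1\}$. A subset $S\subseteq\hat G$ is covered by $\Lambda\subseteq\hat G$ if $S\subseteq\{\sum_{\lambda\in\Lambda}\epsilon_\lambda\lambda : \epsilon_\lambda\in\{-1,0,1\}\}$ (the empty sum being the identity $0$), and $S$ is $d$-covered if it is covered by some $\Lambda\subseteq\hat G$ with $|\Lambda|\le d$. *)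

(* A finite abelian group G is a finZmodType (written additively);
   complex values are taken in algC (characters of a finite group take algebraic values). *)
From mathcomp Require Import all_boot all_order all_algebra all_field.
Set Implicit Arguments. Unset Strict Implicit. Unset Printing Implicit Defensive.
Import Order.TTheory GRing.Theory Num.Theory.
Local Open Scope ring_scope.

(* gamma in \hat G, identified with its character u_gamma : G -> unit circle *)
Definition is_character (G : finZmodType) (u : {ffun G -> algC}) : Prop :=
  (forall x y : G, u (x + y) = u x * u y) /\ (forall x : G, `|u x| = 1).

Definition fourier (G : finZmodType) (f : G -> algC) (u : {ffun G -> algC}) : algC :=
  (#|G|%:R)^-1 * \sum_(x : G) f x * (u x)^*.

Definition Spec0 (G : finZmodType) (f : G -> algC) (u : {ffun G -> algC}) : Prop :=
  is_character u /\ fourier f u <> 0.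

Definition in_F (G : finZmodType) (phi : G -> algC) : Prop :=
  exists u : {ffun G -> algC}, is_character u /\
    (phi = (fun x => 'Re (u x)) \/ phi = (fun x => 'Im (u x))).

Definition riesz_product (G : finZmodType) (d : nat) (eps : 'I_d -> int)
  (phi : 'I_d -> G -> algC) : G -> algC :=
  fun x => \prod_(i < d) (1 + (eps i)%:~R * phi i x).

(* The group law of \hat G: sum_{l in L} e_l * l corresponds to the character
   x |-> prod_{l in L} u_l(x)^(e_l); the empty sum is the trivial character. *)
Definition covered_by (G : finZmodType) (S : {ffun G -> algC} -> Prop)
  (L : seq {ffun G -> algC}) : Prop :=
  forall g, S g -> exists e : {ffun G -> algC} -> int,
    (forall l, l \in L -> e l \in [:: -1; 0; 1]) /\
    g = [ffun x => \prod_(l <- L) (l x) ^ (e l)].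

Definition d_covered (G : finZmodType) (d : nat) (S : {ffun G -> algC} -> Prop) : Prop :=
  exists L : seq {ffun G -> algC},
    [/\ uniq L, (size L <= d)%N, (forall l, l \in L -> is_character l) & covered_by S L].

From mathcomp Require Import all_boot all_order all_algebra all_field.
From mathcomp Require Import ring.
Import Order.TTheory GRing.Theory Num.Theory.
Local Open Scope ring_scope.

(** Since [Re u = (u + u^-1)/2] and [Im u = -i(u - u^-1)/2] for a character
    [u], each factor of a Riesz product is [1 + a u + b u^-1], so [R] is a
    linear combination of products [prod_i u_i^(c_i)] with [c_i] in
    [{-1, 0, 1}]; by orthogonality of characters, [Spec_0(R)] consists of such
    products.  The [u_i] need not be distinct, so the covering set is built one
    factor at a time: to absorb a new character [g] into a cover [L], either
    [g] is new and is added to [L], or [L = g :: A] and a recursive cover of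
    [A] absorbing [g^2] takes care of the exponents [+-2], at the cost of at
    most one more element. *)

Section CharacterCovers.
Set Implicit Arguments. Unset Strict Implicit.
Variable G : finZmodType.
Implicit Types (L A B : seq {ffun G -> algC}) (u : {ffun G -> algC}) (f g : G -> algC).

Local Notation trit k := ((k : int) \in [:: -1; 0; 1]).

Definition signed_prod_of L f : Prop :=
  exists e : {ffun G -> algC} -> int,
    (forall l, l \in L -> trit (e l)) /\ forall x, f x = \prod_(l <- L) l x ^ e l.

Lemma eq_signed_prod_of L f g : f =1 g -> signed_prod_of L f -> signed_prod_of L g.
Proof. by move=> fg [e [He Hf]]; exists e; split=> // x; rewrite -fg. Qed.

Lemma perm_signed_prod_of L B f : perm_eq L B -> signed_prod_of L f -> signed_prod_of B f.
Proof.
move=> pLB [e [He Hf]]; exists e; split=> [l|x]; first by rewrite -(perm_mem pLB); apply: He.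
by rewrite Hf (perm_big _ pLB).
Qed.

Lemma signed_prod_of_cons L u f (c : int) : u \notin L -> trit c ->
  signed_prod_of L f -> signed_prod_of (u :: L) (fun x => f x * u x ^ c).
Proof.
move=> uL Hc [e [He Hf]]; exists (fun l => if l == u then c else e l); split.
  by move=> l; rewrite inE; case: eqP => //= _ /He.
move=> x; rewrite big_cons eqxx Hf mulrC; congr (_ * _).
by apply: eq_big_seq => l lL; case: eqP => // elu; rewrite -elu lL in uL.
Qed.

Lemma signed_prod_of_consP L u f : signed_prod_of (u :: L) f ->
  exists a (c : int), [/\ signed_prod_of L a, trit c & forall x, f x = a x * u x ^ c].
Proof.
move=> [e [He Hf]]; exists (fun x => \prod_(l <- L) l x ^ e l), (e u); split.
- by exists e; split=> // l lL; apply: He; rewrite inE lL orbT.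
- by apply: He; rewrite inE eqxx.
- by move=> x; rewrite Hf big_cons mulrC.
Qed.

Lemma sub_signed_prod_of A B f : uniq A -> uniq B -> {subset A <= B} ->
  signed_prod_of A f -> signed_prod_of B f.
Proof.
move=> uA uB sAB [e [He Hf]]; exists (fun l => if l \in A then e l else 0); split.
  by move=> l _; case: ifP => [/He|].
have pA : perm_eq A [seq l <- B | l \in A].
  apply: uniq_perm => //; first exact: filter_uniq.
  by move=> l; rewrite mem_filter; case lA: (l \in A); rewrite //= sAB.
move=> x; rewrite Hf (perm_big _ pA) big_filter big_mkcond /=.
by apply: eq_bigr => l _; case: ifP; rewrite ?expr0z.
Qed.

Lemma char_neq0 u x : is_character u -> u x != 0.
Proof. by case=> _ /(_ x) ux1; rewrite -normr_eq0 ux1 oner_neq0. Qed.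

Lemma char_conj u x : is_character u -> (u x)^* = (u x)^-1.
Proof. by case=> _ /(_ x) ux1; rewrite invC_norm ux1 expr1n invr1 mul1r. Qed.

Lemma char_sqr u : is_character u -> is_character [ffun x => u x * u x].
Proof.
case=> uM u1; split=> [x y|x]; rewrite !ffunE; first by rewrite uM mulrACA.
by rewrite normrM u1 mulr1.
Qed.

Lemma signed_prod_of_morph L f : (forall l, l \in L -> is_character l) ->
  signed_prod_of L f -> forall x y, f (x + y) = f x * f y.
Proof.
move=> cL [e [_ Hf]] x y; rewrite !Hf -big_split /=.
apply: eq_big_seq => l lL; have [lM _] := cL l lL.
by rewrite lM exprzMl // unitfE char_neq0 //; apply: cL.
Qed.

Lemma trit_add (e c : int) : trit e -> trit c ->
  trit (e + c) \/ exists2 k : int, trit k & e + c = k + k.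
Proof.
rewrite !inE => /or3P[]/eqP-> /or3P[]/eqP->;
  first [by left | by right; exists (-1) | by right; exists 1].
Qed.

Definition shift_covered L u B : Prop :=
  forall f (c : int), signed_prod_of L f -> trit c ->
    signed_prod_of B (fun x => f x * u x ^ c).

Lemma shift_covered0 L u B f :
  shift_covered L u B -> signed_prod_of L f -> signed_prod_of B f.
Proof.
move=> cov Hf; apply: eq_signed_prod_of (cov f 0 Hf isT) => x.
by rewrite expr0z mulr1.
Qed.

Lemma signed_prod_of_shift_split L u f (c : int) :
  u \in L -> is_character u -> signed_prod_of L f -> trit c ->
  exists a (k : int), [/\ signed_prod_of (rem u L) a, trit k &
    (forall x, f x * u x ^ c = a x * u x ^ k) \/
    (forall x, f x * u x ^ c = a x * [ffun y => u y * u y] x ^ k)].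
Proof.
move=> uL cu Hf Hc; have uU x : u x \is a GRing.unit by rewrite unitfE char_neq0.
have [a [e [Ha He Hfa]]] := signed_prod_of_consP (perm_signed_prod_of (perm_to_rem uL) Hf).
have [Hec|[k Hk Hek]] := trit_add He Hc.
  by exists a, (e + c); split=> //; left=> x; rewrite Hfa -mulrA -exprzDr.
exists a, k; split=> //; right=> x.
by rewrite Hfa -mulrA -exprzDr // Hek ffunE exprzMl // exprzDr.
Qed.

Definition small_shift_cover L u B : Prop :=
  [/\ uniq B, (size B <= (size L).+1)%N, (forall l, l \in B -> is_character l),
     {subset L <= B} & shift_covered L u B].

Lemma small_shift_cover_cons L u : u \notin L -> uniq L ->
  (forall l, l \in L -> is_character l) -> is_character u ->
  small_shift_cover L u (u :: L).
Proof.
move=> uLN uL cL cu; split=> /=; rewrite ?uLN //.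
- by move=> l; rewrite inE => /predU1P[->|/cL].
- by move=> l lL; rewrite inE lL orbT.
- by move=> f c Hf Hc; apply: signed_prod_of_cons.
Qed.

Lemma small_shift_cover_rem L u A' : uniq L -> (forall l, l \in L -> is_character l) ->
  u \in L -> small_shift_cover (rem u L) [ffun y => u y * u y] A' ->
  exists B, small_shift_cover L u B.
Proof.
move=> uL cL uinL [uA' sA' cA' AA' covA']; have cu := cL u uinL.
have pL := perm_to_rem uinL; set A := rem u L in pL sA' AA' covA' *.
have uninA : u \notin A by rewrite mem_rem_uniqF.
have sizeL : size L = (size A).+1 by rewrite (perm_size pL).
have [uinA'|uninA'] := boolP (u \in A').
  (* [A'] contains [u :: A] and is not longer, so it is [L] up to order. *)
  have A'L : {subset A' <= L}.
    have [_ eqA'] : (size (u :: A) = size A') * (u :: A =i A').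
      apply: uniq_min_size; rewrite /= ?uninA ?rem_uniq //.
      by move=> l; rewrite inE => /predU1P[->|/AA'].
    by move=> l; rewrite -eqA' -(perm_mem pL).
  exists L; split=> // f c Hf Hc.
  have [a [k [Ha Hk [Hx|Hx]]]] := signed_prod_of_shift_split uinL cu Hf Hc;
    apply: eq_signed_prod_of (fun x => esym (Hx x)) _.
    by apply: perm_signed_prod_of (signed_prod_of_cons uninA Hk Ha); rewrite perm_sym.
  exact: sub_signed_prod_of uA' uL A'L (covA' a k Ha Hk).
exists (u :: A'); split=> /=; rewrite ?uninA' // ?sizeL //.
- by move=> l; rewrite inE => /predU1P[->|/cA'].
- by move=> l; rewrite (perm_mem pL) !inE => /predU1P[->|/AA' ->]; rewrite ?eqxx ?orbT.
move=> f c Hf Hc.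
have [a [k [Ha Hk [Hx|Hx]]]] := signed_prod_of_shift_split uinL cu Hf Hc;
  apply: eq_signed_prod_of (fun x => esym (Hx x)) _.
  exact: signed_prod_of_cons uninA' Hk (shift_covered0 covA' Ha).
apply: eq_signed_prod_of (signed_prod_of_cons uninA' (isT : trit 0) (covA' a k Ha Hk)).
by move=> x; rewrite expr0z mulr1.
Qed.

Lemma small_shift_coverP L u : uniq L -> (forall l, l \in L -> is_character l) ->
  is_character u -> exists B, small_shift_cover L u B.
Proof.
move: {2}(size L) (leqnn (size L)) => n; elim: n L u => [|n IH] L u sLn uL cL cu;
  have [uinL|uninL] := boolP (u \in L);
  try by exists (u :: L); apply: small_shift_cover_cons.
  by case: L sLn uinL {uL cL}.
have sA : (size (rem u L) <= n)%N.
  by rewrite -ltnS (leq_trans _ sLn) // (perm_size (perm_to_rem uinL)).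
have cA l : l \in rem u L -> is_character l by move/mem_rem/cL.
have [A' covA'] := IH _ _ sA (rem_uniq u uL) cA (char_sqr cu).
exact: small_shift_cover_rem uL cL uinL covA'.
Qed.

Definition trig_poly_over L f : Prop :=
  exists s : seq (algC * {ffun G -> algC}), (forall p, p \in s -> signed_prod_of L p.2) /\
    forall x, f x = \sum_(p <- s) p.1 * p.2 x.

Lemma eq_trig_poly_over L f g : f =1 g -> trig_poly_over L f -> trig_poly_over L g.
Proof. by move=> fg [s [Hs Hf]]; exists s; split=> // x; rewrite -fg. Qed.

Lemma trig_poly_over1 : trig_poly_over [::] (fun=> 1).
Proof.
exists [:: (1, [ffun=> 1])]; split=> [p|x]; last by rewrite big_seq1 ffunE mulr1.
rewrite inE => /eqP-> /=; exists (fun=> 0); split=> // x.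
by rewrite ffunE big_nil.
Qed.

Lemma trig_poly_overD L f g :
  trig_poly_over L f -> trig_poly_over L g -> trig_poly_over L (fun x => f x + g x).
Proof.
move=> [s [Hs Hf]] [t [Ht Hg]]; exists (s ++ t); split=> [p|x].
  by rewrite mem_cat => /orP[/Hs|/Ht].
by rewrite big_cat Hf Hg.
Qed.

Lemma trig_poly_overZ L a f : trig_poly_over L f -> trig_poly_over L (fun x => a * f x).
Proof.
move=> [s [Hs Hf]]; exists [seq (a * p.1, p.2) | p <- s]; split=> [q|x].
  by case/mapP=> p ps -> /=; apply: Hs.
by rewrite Hf big_map mulr_sumr; apply: eq_bigr => p _; rewrite mulrA.
Qed.

Lemma trig_poly_over_shift L u B f (c : int) : shift_covered L u B -> trit c ->
  trig_poly_over L f -> trig_poly_over B (fun x => f x * u x ^ c).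
Proof.
move=> cov Hc [s [Hs Hf]].
exists [seq (p.1, [ffun x => p.2 x * u x ^ c]) | p : algC * {ffun G -> algC} <- s].
split=> [q|x].
  case/mapP=> p ps -> /=; apply: eq_signed_prod_of (cov _ c (Hs p ps) Hc) => x.
  by rewrite ffunE.
by rewrite Hf big_map mulr_suml; apply: eq_bigr => p _; rewrite ffunE mulrA.
Qed.

Lemma trig_poly_over_laurent L u B (a b : algC) f : shift_covered L u B ->
  trig_poly_over L f -> trig_poly_over B (fun x => f x * (1 + a * u x + b * (u x)^-1)).
Proof.
move=> cov Hf.
have shift (c : int) : trit c -> trig_poly_over B (fun x => f x * u x ^ c).
  by move=> Hc; apply: trig_poly_over_shift cov Hc Hf.
have := trig_poly_overD (trig_poly_overD (shift 0 isT) (trig_poly_overZ a (shift 1 isT)))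
  (trig_poly_overZ b (shift (-1) isT)).
apply: eq_trig_poly_over => x /=.
by rewrite expr0z expr1z exprN1; ring.
Qed.

Lemma in_F_laurent phi : in_F phi -> exists u (a b : algC),
  is_character u /\ forall x, phi x = a * u x + b * (u x)^-1.
Proof.
move=> [u [cu [->|->]]]; exists u.
  by exists 2^-1, 2^-1; split=> // x; rewrite ReE char_conj //; ring.
by exists (- 'i / 2), ('i / 2); split=> // x; rewrite ImE char_conj //; ring.
Qed.

Lemma riesz_product_trig_poly d (eps : 'I_d -> int) (phi : 'I_d -> G -> algC) :
  (forall i, in_F (phi i)) -> exists L, [/\ uniq L, (size L <= d)%N,
    (forall l, l \in L -> is_character l) & trig_poly_over L (riesz_product eps phi)].
Proof.
elim: d eps phi => [|d IH] eps phi HF.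
  exists [::]; split=> //; apply: eq_trig_poly_over trig_poly_over1 => x.
  by rewrite /riesz_product big_ord0.
have [L [uL sL cL HR]] := IH (fun i => eps (widen_ord (leqnSn d) i))
  (fun i => phi (widen_ord (leqnSn d) i)) (fun i => HF _).
have [u [a [b [cu Hphi]]]] := in_F_laurent (HF ord_max).
have [B [uB sB cB _ cov]] := small_shift_coverP uL cL cu.
exists B; split=> //; first exact: leq_trans sB _.
have := trig_poly_over_laurent ((eps ord_max)%:~R * a) ((eps ord_max)%:~R * b) cov HR.
apply: eq_trig_poly_over => x.
by rewrite /riesz_product big_ord_recr /= Hphi; congr (_ * _); ring.
Qed.

Lemma sum_morph_conj_char_eq0 f (g : {ffun G -> algC}) :
  (forall x y, f (x + y) = f x * f y) -> is_character g -> (exists x0, f x0 != g x0) ->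
  \sum_x f x * (g x)^* = 0.
Proof.
move=> fM [gM g1] [x0 fgx0]; pose w x := f x * (g x)^*.
(* Translating by [x0] multiplies the sum by [w x0], which is not [1]. *)
have wM x : w (x + x0) = w x * w x0 by rewrite /w fM gM rmorphM /= mulrACA.
have w_sum : \sum_x w x = w x0 * \sum_x w x.
  rewrite {1}(reindex_inj (addIr x0)) /= mulr_sumr.
  by apply: eq_bigr => x _; rewrite wM mulrC.
have w_neq1 : w x0 != 1.
  apply: contra fgx0 => /eqP wx01.
  have : w x0 * g x0 = g x0 by rewrite wx01 mul1r.
  by rewrite /w -mulrA [_^* * _]mulrC -normCK g1 expr1n mulr1 => ->.
have : (1 - w x0) * \sum_x w x = 0 by rewrite mulrBl mul1r -w_sum subrr.
by move/eqP; rewrite mulf_eq0 subr_eq0 eq_sym (negbTE w_neq1) => /eqP.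
Qed.

Lemma fourier_trig_poly_over L f (g : {ffun G -> algC}) :
  (forall l, l \in L -> is_character l) -> trig_poly_over L f -> is_character g ->
  fourier f g != 0 -> signed_prod_of L g.
Proof.
move=> cL [s [Hs Hf]] cg.
have [/hasP[p ps /forallP p2g] _|/hasPn sN] :=
  boolP (has (fun p : algC * {ffun G -> algC} => [forall x, p.2 x == g x]) s).
  by apply: eq_signed_prod_of (Hs p ps) => x; apply/eqP.
case/negP; apply/eqP.
have fg_orth p : p \in s -> \sum_x p.2 x * (g x)^* = 0.
  move=> ps; apply: sum_morph_conj_char_eq0 (signed_prod_of_morph cL (Hs p ps)) cg _.
  by have /forallPn[x0 px0] := sN p ps; exists x0.
rewrite /fourier (eq_bigr (fun x => \sum_(p <- s) p.1 * (p.2 x * (g x)^*))); last first.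
  by move=> x _; rewrite Hf mulr_suml; apply: eq_bigr => p _; rewrite mulrA.
rewrite exchange_big big1_seq ?mulr0 // => p /andP[_ ps].
by rewrite -mulr_sumr fg_orth ?mulr0.
Qed.

End CharacterCovers.

Theorem lemma3p1 (G : finZmodType) (d : nat) (eps : 'I_d -> int)
  (phi : 'I_d -> G -> algC) :
  (forall i, in_F (phi i)) ->
  (forall i, eps i \in [:: -1; 0; 1]) ->
  d_covered d (Spec0 (riesz_product eps phi)).
Proof.
move=> HF _; have [L [uL sL cL HR]] := riesz_product_trig_poly eps HF.
exists L; split=> // g [cg /eqP Rg].
have [e [He Hg]] := fourier_trig_poly_over cL HR cg Rg.
by exists e; split=> //; apply/ffunP => x; rewrite ffunE Hg.
Qed.
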